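(* Let $f:(\mathbb R^2,q)\to(\mathbb R^3,p)$ be a smooth germ with a corank 1 singularity at $q$ whose curvature parabola $\Delta_p$ is not a line (so that $\kappa_a(p)$ is defined). Then $\kappa_a(p)=0$ if and only if the axial vector $v_a$ is a binormal direction.
   Context: $T_pM=\operatorname{im}df_q$, $N_pM$ its orthogonal complement with a fixed orientation. First fundamental form $I(X,Y)=\langle df_qX,df_qY\rangle$; second fundamental form $II$: the symmetric bilinear map $T_q\mathbb R^2\times T_q\mathbb R^2\to N_pM$ with $II(\partial_u,\partial_u)=f_{uu}(q)^\perp$, $II(\partial_u,\partial_v)=f_{uv}(q)^\perp$, $II(\partial_v,\partial_v)=f_{vv}(q)^\perp$ ($\perp$ = orthogonal projection to $N_pM$); $II_\nu=\langle II,\nu\rangle$. Curvature parabola $\Delta_p=\{II(X,X):I(X,X)=1\}$; in coordinates with $f_v(q)=0$, $|f_u(q)|=1$ it is parametrized by $\eta(y)=II(\partial_u+y\partial_v,\partial_u+y\partial_v)$, $y\in\mathbb R$, and is a non-degenerate parabola, half-line, line or point. A nonzero $X\in T_q\mathbb R^2$ is asymptotic if there is a nonzero $\nu\in N_pM$ with $II_\nu(X,Y)=0$ for all $Y$; such $\nu$ is a binormal direction. Axial vector $v_a$: for a non-degenerate parabola, the unit vector along the axis of symmetry pointing to its interior; for a half-line, $\eta'(y)/|\eta'(y)|$ for any $y>0$ with $\eta'(y)\neq 0$; for a point $c\ne0$, the unit vector with $\{v_a,c/|c|\}$ a positively oriented orthonormal frame; for the origin, any unit vector. Axial curvature $\kappa_a(p)=\min_{y}\langle\eta(y),v_a\rangle$.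 *)

From HB Require Import structures.
From mathcomp Require Import all_boot all_order all_algebra.
From mathcomp Require Import all_classical all_reals all_analysis.
Set Implicit Arguments. Unset Strict Implicit. Unset Printing Implicit Defensive.
Import Order.TTheory GRing.Theory Num.Theory.
Import numFieldNormedType.Exports.
Local Open Scope classical_set_scope.
Local Open Scope ring_scope.

Section Defs.
Variable R : realType.

Definition dot n (x y : 'rV[R]_n) : R := \sum_(i < n) x 0 i * y 0 i.

Fixpoint iter_D (vs : seq 'rV[R]_2) (f : 'rV[R]_2 -> 'rV[R]_3) : 'rV[R]_2 -> 'rV[R]_3 :=
  match vs with
  | [::] => f
  | v :: vs' => fun x => 'D_v (iter_D vs' f) x
  end.

Definition smooth (f : 'rV[R]_2 -> 'rV[R]_3) : Prop :=
  forall (vs : seq 'rV[R]_2) (x : 'rV[R]_2), differentiable (iter_D vs f) x.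

Definition dfq (f : 'rV[R]_2 -> 'rV[R]_3) (q X : 'rV[R]_2) : 'rV[R]_3 := 'D_X f q.

Definition jac (f : 'rV[R]_2 -> 'rV[R]_3) (q : 'rV[R]_2) : 'M[R]_(2, 3) :=
  \matrix_(i < 2) dfq f q (delta_mx 0 i).

Definition corank1 (f : 'rV[R]_2 -> 'rV[R]_3) (q : 'rV[R]_2) : Prop :=
  \rank (jac f q) = 1%N.

Definition tangent (f : 'rV[R]_2 -> 'rV[R]_3) (q : 'rV[R]_2) : set 'rV[R]_3 :=
  [set dfq f q X | X in setT].

Definition normal (f : 'rV[R]_2 -> 'rV[R]_3) (q : 'rV[R]_2) : set 'rV[R]_3 :=
  [set n | forall w, tangent f q w -> dot n w = 0].

Definition orth_proj (N : set 'rV[R]_3) (x : 'rV[R]_3) : 'rV[R]_3 :=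
  xget 0 [set y | N y /\ forall n, N n -> dot (x - y) n = 0].

Definition fff (f : 'rV[R]_2 -> 'rV[R]_3) (q X Y : 'rV[R]_2) : R :=
  dot (dfq f q X) (dfq f q Y).

Definition sff (f : 'rV[R]_2 -> 'rV[R]_3) (q X Y : 'rV[R]_2) : 'rV[R]_3 :=
  orth_proj (normal f q) ('D_X ('D_Y f) q).

Definition curv_parabola (f : 'rV[R]_2 -> 'rV[R]_3) (q : 'rV[R]_2) : set 'rV[R]_3 :=
  [set sff f q X X | X in [set X | fff f q X X = 1]].

Definition binormal (f : 'rV[R]_2 -> 'rV[R]_3) (q : 'rV[R]_2) (nu : 'rV[R]_3) : Prop :=
  normal f q nu /\ nu != 0 /\
  exists X : 'rV[R]_2, X != 0 /\ forall Y, dot (sff f q X Y) nu = 0.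

Definition is_line (S : set 'rV[R]_3) : Prop :=
  exists P w : 'rV[R]_3, w != 0 /\ S = [set P + t *: w | t in [set: R]].

(* non-degenerate parabola in N with vertex V, axis V + R e2, interior side +e2 *)
Definition is_parabola_with_axis (N : set 'rV[R]_3) (S : set 'rV[R]_3) (e2 : 'rV[R]_3) : Prop :=
  exists (V e1 : 'rV[R]_3) (k : R),
    [/\ N e1, N e2, dot e1 e1 = 1, dot e2 e2 = 1 & dot e1 e2 = 0] /\ 0 < k /\
    S = [set V + s *: e1 + (k * s ^+ 2) *: e2 | s in [set: R]].

Definition is_half_line_dir (S : set 'rV[R]_3) (w : 'rV[R]_3) : Prop :=
  dot w w = 1 /\ exists E : 'rV[R]_3, S = [set E + t *: w | t in [set t : R | 0 <= t]].

Definition det3 (a b c : 'rV[R]_3) : R :=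
  \det (\matrix_(i < 3) (if i == 0 :> nat then a else if i == 1 :> nat then b else c)).

(* The orientation of N_pM is given by a nonzero tangent vector t: a frame (e1,e2)
   of N_pM is positively oriented iff (t, e1, e2) is a positive frame of R^3. *)
Definition pos_oriented (t e1 e2 : 'rV[R]_3) : Prop := 0 < det3 t e1 e2.

Definition axial_vector (f : 'rV[R]_2 -> 'rV[R]_3) (q : 'rV[R]_2) (t v : 'rV[R]_3) : Prop :=
  let N := normal f q in
  let S := curv_parabola f q in
  is_parabola_with_axis N S v
  \/ is_half_line_dir S v
  \/ (exists c : 'rV[R]_3, c != 0 /\ S = [set c] /\
        N v /\ dot v v = 1 /\ dot v c = 0 /\ pos_oriented t v c)
  \/ (S = [set 0] /\ N v /\ dot v v = 1).

Definition axial_curvature (f : 'rV[R]_2 -> 'rV[R]_3) (q : 'rV[R]_2) (v : 'rV[R]_3) : R :=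
  inf [set dot x v | x in curv_parabola f q].

End Defs.

From HB Require Import structures.
From mathcomp Require Import all_boot all_order all_algebra.
From mathcomp Require Import all_classical all_reals all_analysis.
From mathcomp Require Import ring lra.
Import Order.TTheory GRing.Theory Num.Theory.
Import numFieldNormedType.Exports.
Local Open Scope classical_set_scope.
Local Open Scope ring_scope.

(* Choose X0 with |df_q X0| = 1 and K spanning ker df_q.  Then (X0, K) is a
   basis, N_pM = (df_q X0)^perp, and the unit vectors of I are +-X0 + y K.  For a
   normal vector nu the heights <x, nu> of the points x of Delta_p are therefore
   exactly the values a + 2 b y + c y^2, where (a b; b c) is the matrix of II_nu
   in the basis (X0, K), symmetric by Schwarz's theorem; and nu is binormal iff
   II_nu is degenerate, i.e. a c = b^2.  For each shape of Delta_p the axial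
   vector v is a unit normal vector, and the height along v either attains its
   minimum kappa_a without being constant, which forces c > 0 and
   c kappa_a = a c - b^2, or vanishes identically, which forces a c = b^2 and
   kappa_a = 0. *)

Section Schwarz.
Context {R : realType} {V : normedModType R}.

Lemma differentiable_remainder {W : normedModType R} {g : V -> W} {x : V} {e : R} :
  differentiable g x -> 0 < e -> exists2 d : R, 0 < d &
    forall z, `|z| < d -> `|g (z + x) - g x - 'd g x z| <= e * `|z|.
Proof.
move=> /diff_locally /eqaddoP /(_ e) gx e0; have /nbhs_ballP[d d0 gd] := gx e0.
exists d => // z zd; have := gd z; rewrite -ball_normE /= sub0r normrN => /(_ zd).
by rewrite /= opprD addrA.
Qed.

Lemma is_derive_line {W : normedModType R} (h : V -> W) a X s :
  derivable h (a + s *: X) X ->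
  is_derive s 1 (fun r : R => h (a + r *: X)) ('D_X h (a + s *: X)).
Proof.
move=> dh.
have E : (fun r : R => r^-1 *: (((fun r => h (a + r *: X)) \o shift s) (r *: 1) - h (a + s *: X)))
  = (fun r => r^-1 *: ((h \o shift (a + s *: X)) (r *: X) - h (a + s *: X))).
  apply/funext => r /=; congr (_ *: (h _ - _)).
  by rewrite scaler1 scalerDl addrCA addrC.
by apply: DeriveDef; rewrite /derivable /derive /= E.
Qed.

Definition second_difference (h : V -> R) q X Y t :=
  h (q + t *: Y + t *: X) - h (q + t *: X) - h (q + t *: Y) + h q.

Lemma second_differenceC h q X Y t :
  second_difference h q X Y t = second_difference h q Y X t.
Proof. by rewrite /second_difference [q + t *: Y + _]addrAC; ring. Qed.

Variable h : V -> R.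
Hypothesis dh : forall x, differentiable h x.

Lemma second_difference_MVT q X Y {t : R} : 0 < t -> exists2 c, 0 < c < t &
  second_difference h q X Y t = t * ('D_X h (q + t *: Y + c *: X) - 'D_X h (q + c *: X)).
Proof.
move=> t0.
pose phi s := h (q + t *: Y + s *: X) - h (q + s *: X).
have Dphi (s : R) : is_derive s 1 phi ('D_X h (q + t *: Y + s *: X) - 'D_X h (q + s *: X)).
  by apply: is_deriveB; apply: is_derive_line; exact: diff_derivable.
have cphi : {within `[0, t], continuous phi}.
  apply: continuous_subspaceT => s; apply: differentiable_continuous.
  by apply/derivable1_diffP; have [] := Dphi s.
have [c cin Ephi] := MVT t0 (fun s _ => Dphi s) cphi.
exists c; first by rewrite !(itvP cin).
rewrite subr0 mulrC in Ephi; rewrite -Ephi /phi /second_difference !scale0r !addr0; ring.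
Qed.

Lemma second_difference_approx q X Y {e : R} : differentiable ('D_X h) q -> 0 < e ->
  exists2 d : R, 0 < d & forall t, 0 < t -> t < d ->
    `|second_difference h q X Y t - t ^+ 2 * 'D_Y ('D_X h) q| <= e * t ^+ 2.
Proof.
move=> dg e0; set g := 'D_X h; set s := `|X| + `|Y|.
have s0 : 0 <= s by rewrite addr_ge0.
have s1 : 0 < 2 * s + 1 by rewrite ltr_wpDl // mulr_ge0.
set eps := e / (2 * s + 1); have eps0 : 0 < eps by rewrite divr_gt0.
have [d' d'0 rem] := differentiable_remainder dg eps0.
exists (d' / (s + 1)) => [|t t0 td]; first by rewrite divr_gt0 // ltr_wpDl.
have tsd : t * s < d'.
  move: td; rewrite ltr_pdivlMr ?ltr_wpDl // => /(le_lt_trans _); apply.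
  by rewrite ler_pM2l // lerDl.
have [c /andP[c0 ct] ->] := second_difference_MVT q X Y t0.
have remt z : `|z| <= t * s -> `|g (z + q) - g q - 'd g q z| <= eps * (t * s).
  move=> zts; apply: le_trans (rem z (le_lt_trans zts tsd)) _.
  by rewrite ler_pM2l.
have ncX : `|c *: X| <= t * `|X|.
  by rewrite normrZ gtr0_norm // ler_wpM2r // ltW.
have ncXY : `|c *: X + t *: Y| <= t * s.
  apply: le_trans (ler_normD _ _) _.
  by rewrite [`|t *: Y|]normrZ gtr0_norm // mulrDr lerD2r.
have ncXs : `|c *: X| <= t * s.
  by apply: le_trans ncX _; rewrite ler_pM2l // lerDl.
rewrite -/g (deriveE _ dg) -addrA [t *: Y + _]addrC.
set z1 := c *: X + t *: Y; set z2 := c *: X.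
have dz1 : 'd g q z1 = c * 'd g q X + t * 'd g q Y by rewrite linearD !linearZ.
have dz2 : 'd g q z2 = c * 'd g q X by rewrite linearZ.
have -> : t * (g (q + z1) - g (q + z2)) - t ^+ 2 * 'd g q Y =
    t * ((g (z1 + q) - g q - 'd g q z1) - (g (z2 + q) - g q - 'd g q z2)).
  by rewrite dz1 dz2 ![_ + q]addrC; ring.
rewrite normrM gtr0_norm //; apply: le_trans (ler_wpM2l (ltW t0) (ler_normB _ _)) _.
apply: le_trans (ler_wpM2l (ltW t0) (lerD (remt _ ncXY) (remt _ ncXs))) _.
have -> : e * t ^+ 2 = eps * t ^+ 2 * (2 * s + 1) by rewrite /eps; field; exact: lt0r_neq0.
have -> : t * (eps * (t * s) + eps * (t * s)) = eps * t ^+ 2 * (2 * s) by ring.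
by rewrite ler_pM2l ?lerDl // mulr_gt0 // exprn_gt0.
Qed.

Lemma schwarz q X Y : differentiable ('D_X h) q -> differentiable ('D_Y h) q ->
  'D_Y ('D_X h) q = 'D_X ('D_Y h) q.
Proof.
move=> dX dY; apply/eqP; rewrite -subr_eq0 -normr_le0; apply/ler_addgt0Pr => e e0.
have e20 : 0 < e / 2 by rewrite divr_gt0.
have [d1 d10 approxXY] := second_difference_approx q X Y dX e20.
have [d2 d20 approxYX] := second_difference_approx q Y X dY e20.
pose t := Num.min d1 d2 / 2.
have t0 : 0 < t by rewrite divr_gt0 // lt_min d10 d20.
have /andP[td1 td2] : (t < d1) && (t < d2).
  by rewrite -lt_min /t ltr_pdivrMr // ltr_pMr ?lt_min ?d10 ?d20 // ltr1n.
have := approxXY t t0 td1; have := approxYX t t0 td2; clearbody t.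
rewrite second_differenceC; set D := second_difference h q X Y t => bYX bXY.
clearbody D.
have t20 : 0 < t ^+ 2 by rewrite exprn_gt0.
rewrite add0r -(ler_pM2l t20) -{1}(gtr0_norm t20) -normrM mulrBr.
apply: le_trans (ler_distD D _ _) _; rewrite distrC.
apply: le_trans (lerD bXY bYX) _.
by rewrite -mulrDl -splitr mulrC.
Qed.

End Schwarz.

Lemma schwarz_rV {R : realType} {V : normedModType R} {n} (h : V -> 'rV[R]_n) q X Y :
  (forall x, differentiable h x) ->
  differentiable ('D_X h) q -> differentiable ('D_Y h) q ->
  'D_Y ('D_X h) q = 'D_X ('D_Y h) q.
Proof.
move=> dh dX dY; apply/rowP => j.
pose hj x := h x 0 j.
have coordD Z : (fun x => 'D_Z h x 0 j) = 'D_Z hj.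
  by apply/funext => x; rewrite derive_mx ?mxE //; exact: diff_derivable.
have coord_diff (g : V -> 'rV[R]_n) x :
    differentiable g x -> differentiable (fun y => g y 0 j) x.
  by move=> dg; exact: (differentiable_comp dg (differentiable_coord _ _ _)).
rewrite derive_mx ?mxE; last exact: diff_derivable.
rewrite derive_mx ?mxE; last exact: diff_derivable.
rewrite !coordD; apply: schwarz => [x||]; first exact: coord_diff.
  by rewrite -coordD; exact: coord_diff.
by rewrite -coordD; exact: coord_diff.
Qed.

Section Dot.
Context {R : realType} {n : nat}.
Implicit Types (x y z : 'rV[R]_n).

Lemma dotC x y : dot x y = dot y x.
Proof. by apply: eq_bigr => i _; rewrite mulrC. Qed.

Lemma dotDl x y z : dot (x + y) z = dot x z + dot y z.
Proof. by rewrite /dot -big_split; apply: eq_bigr => i _; rewrite mxE mulrDl. Qed.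

Lemma dotZl a x y : dot (a *: x) y = a * dot x y.
Proof. by rewrite /dot mulr_sumr; apply: eq_bigr => i _; rewrite mxE mulrA. Qed.

Lemma dotZr a x y : dot x (a *: y) = a * dot x y.
Proof. by rewrite dotC dotZl dotC. Qed.

Lemma dotBl x y z : dot (x - y) z = dot x z - dot y z.
Proof. by rewrite dotDl -scaleN1r dotZl mulN1r. Qed.

Lemma dot0l y : dot 0 y = 0.
Proof. by rewrite -(scale0r 0) dotZl mul0r. Qed.

Lemma dot_gt0 x : x != 0 -> 0 < dot x x.
Proof.
have sq_ge0 i : 0 <= x 0 i * x 0 i by rewrite -expr2 sqr_ge0.
move=> x0; rewrite lt_neqAle sumr_ge0 ?andbT //.
apply: contra x0 => /eqP/esym/psumr_eq0P x0; apply/eqP/rowP => i.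
by apply/eqP; rewrite mxE -sqrf_eq0 expr2 x0.
Qed.

Lemma unit_neq0 {x} : dot x x = 1 -> x != 0.
Proof. by apply: contraPneq => -> /esym/eqP; rewrite dot0l oner_eq0. Qed.

End Dot.

Lemma rank1_sub_rV {F : fieldType} {m n : nat} {A : 'M[F]_(m, n)} {u v : 'rV[F]_n} :
  \rank A = 1%N -> v != 0 -> (v <= A)%MS -> (u <= A)%MS -> exists a, u = a *: v.
Proof.
move=> rA v0 vA uA; apply/sub_rVP; apply: submx_trans uA _.
by rewrite -(mxrank_leqif_sup vA).2 rA rank_rV v0.
Qed.

Definition quad {R : pzRingType} (a b c y : R) := a + 2 * b * y + c * y ^+ 2.

Section Quadratic.
Context {R : realFieldType}.
Variables a b c : R.

Lemma quad0 : quad a b c 0 = a.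
Proof. by rewrite /quad !(mulr0, expr0n, addr0). Qed.

Lemma lbound_quad_lead_ge0 {m : R} : (forall y, m <= quad a b c y) -> 0 <= c.
Proof.
move=> lb; rewrite leNgt; apply/negP => c0.
have am : m <= a by rewrite -quad0.
pose y := 1 + (a - m) / - c.
have y1 : 1 <= y by rewrite lerDl divr_ge0 ?subr_ge0 // oppr_ge0 ltW.
have cy : c * y = c - (a - m) by rewrite /y; field; rewrite ?oppr_eq0 lt_eqF.
have cy2 : c * y ^+ 2 <= c * y by rewrite expr2; nra.
have := lb y; have := lb (- y); rewrite /quad sqrrN; lra.
Qed.

Lemma lbound_quad_lin_eq0 {m : R} : c = 0 -> (forall y, m <= quad a b c y) -> b = 0.
Proof.
move=> c0 lb; apply/eqP; apply: contraT => b0.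
have := lb ((m - a - 1) / (2 * b)); rewrite /quad c0 mul0r addr0 mulrCA divff.
  by rewrite mulr1; lra.
by rewrite mulf_neq0 ?pnatr_eq0.
Qed.

Lemma quad_complete_square y : c * quad a b c y = (c * y + b) ^+ 2 + (a * c - b ^+ 2).
Proof. by rewrite /quad; ring. Qed.

Lemma quad_min_eq0 y1 y2 : (forall y, quad a b c y1 <= quad a b c y) ->
  quad a b c y1 < quad a b c y2 -> (quad a b c y1 = 0 <-> a * c = b ^+ 2).
Proof.
move=> lb lt12.
have c0 : 0 < c.
  rewrite lt_neqAle (lbound_quad_lead_ge0 lb) andbT; apply/eqP => /esym c0.
  by move: lt12; rewrite /quad c0 (lbound_quad_lin_eq0 c0 lb) mulr0 !mul0r !addr0 ltxx.
have cmin : c * quad a b c y1 = a * c - b ^+ 2.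
  apply/le_anti/andP; split; last by rewrite quad_complete_square lerDr sqr_ge0.
  apply: le_trans (ler_wpM2l (ltW c0) (lb (- b / c))) _.
  by rewrite quad_complete_square mulrC divfK ?gt_eqF // addNr expr0n add0r.
split => [q0|e]; first by apply/eqP; rewrite -subr_eq0 -cmin q0 mulr0.
by move: cmin; rewrite e subrr => /eqP; rewrite mulf_eq0 gt_eqF //= => /eqP.
Qed.

Lemma quad_eq0 : (forall y, quad a b c y = 0) -> a * c = b ^+ 2.
Proof.
move=> q0; have a0 : a = 0 by rewrite -quad0.
have b0 : b = 0.
  by have := q0 1; have := q0 (-1); rewrite /quad a0 sqrrN expr1n !mulr1 mulrN1; lra.
by rewrite a0 b0 mul0r expr0n.
Qed.

End Quadratic.

Section SymmetricBilinear2.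
Context {F : fieldType} {T : lmodType F}.
Variables (B : T -> T -> F) (x y : T).
Hypothesis B_linl : forall a b u v w, B (a *: u + b *: v) w = a * B u w + b * B v w.
Hypothesis B_sym : forall u v, B u v = B v u.

Lemma bilin2_frame a b c d : B (a *: x + b *: y) (c *: x + d *: y) =
  a * c * B x x + (a * d + b * c) * B x y + b * d * B y y.
Proof. by rewrite B_linl ![B _ (_ + _)]B_sym !B_linl [B y x]B_sym; ring. Qed.

Hypothesis span : forall z, exists a b, z = a *: x + b *: y.
Hypothesis indep : forall a b, a *: x + b *: y = 0 -> a = 0 /\ b = 0.

Lemma bilin2_degenerateE :
  (exists2 z, z != 0 & forall w, B z w = 0) <-> B x x * B y y = B x y ^+ 2.
Proof.
have Bx a b : B (a *: x + b *: y) x = a * B x x + b * B x y by rewrite B_linl [B y x]B_sym.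
have By a b : B (a *: x + b *: y) y = a * B x y + b * B y y by rewrite B_linl.
split=> [[z z0 Bz]|e].
  have [a [b Ez]] := span z; move: (Bz x) (Bz y); rewrite Ez Bx By => hx hy.
  apply/eqP; rewrite -subr_eq0; apply: contraNT z0 => D0.
  have /eqP : a * (B x x * B y y - B x y ^+ 2) = 0.
    transitivity (B y y * (a * B x x + b * B x y) - B x y * (a * B x y + b * B y y)).
      by ring.
    by rewrite hx hy !mulr0 subrr.
  have /eqP : b * (B x x * B y y - B x y ^+ 2) = 0.
    transitivity (B x x * (a * B x y + b * B y y) - B x y * (a * B x x + b * B x y)).
      by ring.
    by rewrite hx hy !mulr0 subrr.
  by rewrite !mulf_eq0 (negbTE D0) !orbF Ez => /eqP-> /eqP->; rewrite !scale0r addr0.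
have [xy0|xyn0] := eqVneq (B x x, B x y) (0, 0).
  case: xy0 => xx0 xy0; exists x => [|w].
    apply/eqP => x0; have : 1 *: x + 0 *: y = 0 by rewrite x0 scaler0 scale0r addr0.
    by case/indep => /eqP; rewrite oner_eq0.
  by have [c [d ->]] := span w; rewrite B_sym Bx xx0 xy0 !mulr0 addr0.
exists (B x y *: x + (- B x x) *: y) => [|w].
  by apply: contra_neq xyn0 => /indep[-> /eqP]; rewrite oppr_eq0 => /eqP->.
have [c [d ->]] := span w; rewrite bilin2_frame.
by rewrite (_ : _ + _ = d * (B x y ^+ 2 - B x x * B y y)); [rewrite e subrr mulr0|ring].
Qed.

End SymmetricBilinear2.

Lemma inf_eq_min {R : realType} {W : set R} {m : R} : W m -> lbound W m -> inf W = m.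
Proof.
move=> Wm lbm; apply/le_anti/andP; split; first by apply: (ge_inf _ Wm); exists m.
by apply: lb_le_inf => //; exists m.
Qed.

Section Smooth.
Context {R : realType}.
Variables (f : 'rV[R]_2 -> 'rV[R]_3) (q : 'rV[R]_2).
Hypothesis sf : smooth f.

Lemma smooth_differentiable x : differentiable f x.
Proof. exact: (sf [::]). Qed.

Lemma smooth_derive_differentiable Y x : differentiable ('D_Y f) x.
Proof. exact: (sf [:: Y]). Qed.

Lemma derive2C X Y : 'D_X ('D_Y f) q = 'D_Y ('D_X f) q.
Proof.
by apply: schwarz_rV; [exact: smooth_differentiable|exact: smooth_derive_differentiable..].
Qed.

Lemma derive2_jac X Y : 'D_X ('D_Y f) q = X *m jacobian ('D_Y f) q.
Proof. exact/deriveEjacobian/smooth_derive_differentiable. Qed.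

Lemma jacE : jac f q = jacobian f q.
Proof.
apply/row_matrixP => i; rewrite rowK /dfq deriveEjacobian ?rowE //.
exact: smooth_differentiable.
Qed.

Lemma dfq_jac X : dfq f q X = X *m jac f q.
Proof. by rewrite jacE /dfq deriveEjacobian //; exact: smooth_differentiable. Qed.

End Smooth.

Lemma corank1_frame {R : realType} {f : 'rV[R]_2 -> 'rV[R]_3} {q : 'rV[R]_2} :
  smooth f -> corank1 f q -> exists X0 K : 'rV[R]_2,
  [/\ K != 0, dfq f q K = 0, dot (dfq f q X0) (dfq f q X0) = 1 &
      forall X, exists a b, X = a *: X0 + b *: K].
Proof.
move=> sf cr; set J := jac f q.
have rker : \rank (kermx J) = 1%N by rewrite mxrank_ker cr.
have [K KJ K0] : exists2 K : 'rV[R]_2, (K <= kermx J)%MS & K != 0.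
  by apply/rowV0Pn; rewrite -mxrank_eq0 rker.
have [X1 X1J] : exists X1 : 'rV[R]_2, X1 *m J != 0.
  have /rowV0Pn[w /submxP[X1 ->] w0] : J != 0 by rewrite -mxrank_eq0 cr.
  by exists X1.
pose X0 := (Num.sqrt (dot (X1 *m J) (X1 *m J)))^-1 *: X1.
have unitX0 : dot (dfq f q X0) (dfq f q X0) = 1.
  have T0 : 0 < dot (X1 *m J) (X1 *m J) by exact: dot_gt0.
  rewrite dfq_jac // -scalemxAl dotZl dotZr mulrA -expr2 exprVn sqr_sqrtr ?ltW //.
  by rewrite mulVf // gt_eqF.
exists X0, K; split => // [|X]; first by rewrite dfq_jac //; exact/sub_kermxP.
have X0J : X0 *m J != 0 by rewrite -dfq_jac //; exact: unit_neq0.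
have [a XJ] := rank1_sub_rV cr X0J (submxMl _ _) (submxMl X J).
have /(rank1_sub_rV rker K0 KJ)[b Eb] : (X - a *: X0 <= kermx J)%MS.
  by apply/sub_kermxP; rewrite mulmxBl XJ scalemxAl subrr.
by exists a, b; rewrite -Eb addrC subrK.
Qed.

Section NormalSpace.
Context {R : realType}.
Variables (f : 'rV[R]_2 -> 'rV[R]_3) (q : 'rV[R]_2).

Lemma normalB n1 n2 : normal f q n1 -> normal f q n2 -> normal f q (n1 - n2).
Proof. by move=> N1 N2 w Tw; rewrite dotBl N1 // N2 // subrr. Qed.

(* If no orthogonal projection exists, [xget] falls back to 0, which is normal too. *)
Lemma sff_normal X Y : normal f q (sff f q X Y).
Proof. by rewrite /sff /orth_proj; case: xgetP => [y _ []//|_ w _]; exact: dot0l. Qed.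

Lemma curv_parabola_normal x : curv_parabola f q x -> normal f q x.
Proof. by move=> [X _ <-]; exact: sff_normal. Qed.

End NormalSpace.

Lemma dot_orth_proj {R : realType} (N : set 'rV[R]_3) x n :
  (exists y, N y /\ forall n, N n -> dot (x - y) n = 0) ->
  N n -> dot (orth_proj N x) n = dot x n.
Proof.
move=> /(xgetPex 0)[_ perp] Nn; apply/eqP; rewrite eq_sym -subr_eq0 -dotBl.
exact/eqP/perp.
Qed.

Definition sff_nu {R : realType} (f : 'rV[R]_2 -> 'rV[R]_3) q nu X Y :=
  dot (sff f q X Y) nu.

Definition heights {R : realType} {n} (S : set 'rV[R]_n) v := [set dot x v | x in S].

Section Frame.
Context {R : realType} {f : 'rV[R]_2 -> 'rV[R]_3} {q X0 K : 'rV[R]_2}.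
Hypothesis sf : smooth f.
Hypothesis K0 : K != 0.
Hypothesis dfK : dfq f q K = 0.
Hypothesis unitX0 : dot (dfq f q X0) (dfq f q X0) = 1.
Hypothesis frame : forall X, exists a b, X = a *: X0 + b *: K.
Let T0 := dfq f q X0.

Lemma dfq_frame a b : dfq f q (a *: X0 + b *: K) = a *: T0.
Proof. by rewrite dfq_jac // mulmxDl -!scalemxAl -!dfq_jac // dfK scaler0 addr0. Qed.

Lemma normal_frameE n : normal f q n <-> dot n T0 = 0.
Proof.
split=> [Nn|nT0 _ [X _ <-]]; first by apply: Nn; exists X0.
by have [a [b ->]] := frame X; rewrite dfq_frame dotZr nT0 mulr0.
Qed.

Lemma frame_indep a b : a *: X0 + b *: K = 0 -> a = 0 /\ b = 0.
Proof.
move=> abK; have /eqP : a *: T0 = 0 by rewrite -(dfq_frame a b) abK dfq_jac // mul0mx.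
rewrite scaler_eq0 (negbTE (unit_neq0 unitX0)) orbF => /eqP a0; split=> //.
by move: abK => /eqP; rewrite a0 scale0r add0r scaler_eq0 (negbTE K0) orbF => /eqP.
Qed.

Context {nu : 'rV[R]_3}.
Hypothesis Nnu : normal f q nu.
Let II := sff_nu f q nu.

Lemma sff_nuE X Y : II X Y = dot ('D_X ('D_Y f) q) nu.
Proof.
apply: dot_orth_proj Nnu; set x := 'D_X _ _; exists (x - dot x T0 *: T0); split.
  by apply/normal_frameE; rewrite dotBl dotZl unitX0 mulr1 subrr.
by move=> n /normal_frameE nT0; rewrite opprB addrC subrK dotZl (dotC T0) nT0 mulr0.
Qed.

Lemma sff_nuC X Y : II X Y = II Y X.
Proof. by rewrite !sff_nuE derive2C. Qed.

Lemma sff_nu_linl a b X1 X2 Y : II (a *: X1 + b *: X2) Y = a * II X1 Y + b * II X2 Y.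
Proof.
by rewrite !sff_nuE !derive2_jac // mulmxDl -!scalemxAl dotDl !dotZl.
Qed.

Lemma heights_frame :
  heights (curv_parabola f q) nu = range (quad (II X0 X0) (II X0 K) (II K K)).
Proof.
have II_frame := bilin2_frame II X0 K sff_nu_linl sff_nuC.
apply/seteqP; split => [_ [_ [X IX <-] <-]|_ [y _ <-]].
  have [a [b EX]] := frame X; move: IX; rewrite /fff /= EX dfq_frame dotZl dotZr unitX0.
  rewrite mulr1 => a2; exists (a * b) => //; rewrite -[RHS]/(II _ _) II_frame.
  (* generalized so that [ring] does not try to unfold [sff_nu] *)
  move: (II X0 X0) (II X0 K) (II K K) => A B C; apply/eqP; rewrite eq_sym -subr_eq0.
  apply/eqP; transitivity ((a * a - 1) * (A - b * b * C)); first by rewrite /quad; ring.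
  by rewrite a2 subrr mul0r.
exists (sff f q (1 *: X0 + y *: K) (1 *: X0 + y *: K)).
  by exists (1 *: X0 + y *: K) => //; rewrite /fff /= dfq_frame dotZl dotZr unitX0 !mulr1.
rewrite -[LHS]/(II _ _) II_frame /quad.
by move: (II X0 X0) (II X0 K) (II K K) => A B C; ring.
Qed.

Lemma binormal_frameE : nu != 0 ->
  binormal f q nu <-> II X0 X0 * II K K = II X0 K ^+ 2.
Proof.
move=> nu0; rewrite -(bilin2_degenerateE II X0 K sff_nu_linl sff_nuC frame frame_indep).
split=> [[_ [_ [X [Xn0 HX]]]]|[X Xn0 HX]]; first by exists X.
by split=> //; split=> //; exists X.
Qed.

End Frame.

Lemma axial_vector_heights {R : realType} (f : 'rV[R]_2 -> 'rV[R]_3) q t v :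
  axial_vector f q t v ->
  let W := heights (curv_parabola f q) v in
  [/\ normal f q v, v != 0 &
      (exists m, [/\ W m, lbound W m & exists2 w, W w & m < w]) \/ W `<=` [set 0]].
Proof.
move=> ax W; case: ax => [[V [e1 [k [[_ Nv _ v1 e1v] [k0 HS]]]]]|[[v1 [E HS]]|[]]].
- have hV s : dot (V + s *: e1 + (k * s ^+ 2) *: v) v = dot V v + k * s ^+ 2.
    by rewrite !dotDl !dotZl e1v v1 mulr0 addr0 mulr1.
  split=> //; first exact: unit_neq0.
  left; exists (dot V v); rewrite /W HS; split.
  + by exists V => //; exists 0 => //; rewrite expr0n /= mulr0 !scale0r !addr0.
  + by move=> _ [_ [s _ <-] <-]; rewrite hV lerDl mulr_ge0 ?sqr_ge0 ?ltW.
  + exists (dot V v + k); last by rewrite ltrDl.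
    by exists (V + 1 *: e1 + (k * 1 ^+ 2) *: v); [exists 1|rewrite hV expr1n mulr1].
- have hE s : dot (E + s *: v) v = dot E v + s by rewrite dotDl dotZl v1 mulr1.
  have SE : curv_parabola f q E by rewrite HS; exists 0; rewrite /= ?lexx ?scale0r ?addr0.
  have SEv : curv_parabola f q (E + 1 *: v) by rewrite HS; exists 1; rewrite /= ?ler01.
  split; [|exact: unit_neq0|left; exists (dot E v); rewrite /W HS; split].
  + have -> : v = (E + 1 *: v) - E by rewrite scale1r addrC addKr.
    by apply: normalB; exact: curv_parabola_normal.
  + by exists E; rewrite -?HS.
  + by move=> _ [_ [s /= s0 <-] <-]; rewrite hE lerDl.
  + by exists (dot E v + 1); [exists (E + 1 *: v); rewrite -?HS ?hE|rewrite ltrDl].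
- move=> [c [_ [HS [Nv [v1 [vc _]]]]]]; split=> //; first exact: unit_neq0.
  by right; rewrite /W HS => _ [_ -> <-]; rewrite dotC.
- move=> [HS [Nv v1]]; split=> //; first exact: unit_neq0.
  by right; rewrite /W HS => _ [_ -> <-]; rewrite dot0l.
Qed.

Theorem mainTheorem9 (R : realType) (f : 'rV[R]_2 -> 'rV[R]_3) (q : 'rV[R]_2)
    (t v : 'rV[R]_3) :
  smooth f -> corank1 f q ->
  tangent f q t -> t != 0 ->
  ~ is_line (curv_parabola f q) ->
  axial_vector f q t v ->
  (axial_curvature f q v = 0 <-> binormal f q v).
Proof.
(* t only orients v in the one-point case, and a line has no axial vector. *)
move=> sf cr _ _ _ /axial_vector_heights[Nv v0 shape].
have [X0 [K [K0 dfK unitX0 frame]]] := corank1_frame sf cr.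
rewrite /axial_curvature -/(heights _ v) (binormal_frameE sf K0 dfK unitX0 frame Nv v0).
move: shape; rewrite (heights_frame sf dfK unitX0 frame Nv); set p := quad _ _ _.
case=> [[_ [[y1 _ <-] lbp [_ [y2 _ <-] p12]]]|p0].
  rewrite (inf_eq_min _ lbp); last by exists y1.
  by apply: quad_min_eq0 p12 => y; apply: lbp; exists y.
have {}p0 y : p y = 0 by apply: p0; exists y.
have -> : range p = [set 0] by apply/seteqP; split=> [_ [y _ <-]|_ ->]; [exact: p0|exists 0].
by rewrite inf1; split=> [_|_ //]; exact: quad_eq0.
Qed.
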